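(* For all coinitial CCSK transitions $t,u$: $t,u$ are directly key independent if and only if $t\mathrel\iota u$.
   Context: Names $\mathsf N$ with bijection $\overline\cdot$ onto disjoint co-names; $\mathsf L=\mathsf N\cup\overline{\mathsf N}\cup\{\tau\}$ ($\alpha,\beta$ over $\mathsf L$, $\lambda$ over $\mathsf L\setminus\{\tau\}$); keys $\mathsf K$ denumerable. CCSK processes $X::=\mathbf 0\mid\alpha.X\mid X\backslash\lambda\mid X+Y\mid X|Y\mid\alpha[k].X$; $\mathrm{keys}(X)$ keys in $X$. Directions $D\in\{\mathrm L,\mathrm R\}$, $\bar{\mathrm L}=\mathrm R$, $\bar{\mathrm R}=\mathrm L$. Proof keyed labels $\theta::=\upsilon\alpha[k]\mid\upsilon\langle\upsilon_1\lambda[k],\upsilon_2\overline\lambda[k]\rangle$ ($\upsilon,\upsilon_i\in\{|_{\mathrm L},|_{\mathrm R},+_{\mathrm L},+_{\mathrm R}\}^*$), $\ell(\upsilon\alpha[k])=\alpha$, $\ell(\upsilon\langle\cdots\rangle)=\tau$, $\mathrm{key}(\theta)=k$. Forward CCSK$^{\mathrm P}$ transitions: least relation closed under (act) $\alpha.X\xrightarrow{\alpha[k]}\alpha[k].X$ if $\mathrm{keys}(X)=\emptyset$; (pre) $X\xrightarrow\theta X',\mathrm{key}(\theta)\ne k\Rightarrow\alpha[k].X\xrightarrow\theta\alpha[k].X'$; (res) $X\xrightarrow\theta X',\ell(\theta)\notin\{\lambda,\overline\lambda\}\Rightarrow X\backslash\lambda\xrightarrow\theta X'\backslash\lambda$;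 (par) $X\xrightarrow\theta X',\mathrm{key}(\theta)\notin\mathrm{keys}(Y)\Rightarrow X|Y\xrightarrow{|_{\mathrm L}\theta}X'|Y$, $Y|X\xrightarrow{|_{\mathrm R}\theta}Y|X'$; (syn) $X\xrightarrow{\upsilon_1\lambda[k]}X',Y\xrightarrow{\upsilon_2\overline\lambda[k]}Y'\Rightarrow X|Y\xrightarrow{\langle\upsilon_1\lambda[k],\upsilon_2\overline\lambda[k]\rangle}X'|Y'$; (sum) $X\xrightarrow\theta X',\mathrm{keys}(Y)=\emptyset\Rightarrow X+Y\xrightarrow{+_{\mathrm L}\theta}X'+Y$, $Y+X\xrightarrow{+_{\mathrm R}\theta}Y+X'$. Backward transitions are converses. Only processes reachable by a path from a key-free process are considered. Transitions are connected if there is a path from the source of one to the target of the other. CCSK: same processes; for each CCSK$^{\mathrm P}$ transition with label $\theta$ a CCSK transition (same direction, same processes) with label $\ell(\theta)[\mathrm{key}(\theta)]$ (a bijection; $\hat t$ denotes the CCSK$^{\mathrm P}$ transition corresponding to $t$). Independence $\iota$ on proof labels: least relation closed under (C1) $+_D\theta\mathrel\iota+_D\theta'$ if $\theta\mathrel\iota\theta'$; (P1) $|_D\theta\mathrel\iota|_D\theta'$ if $\theta\mathrel\iota\theta'$; (P2$_k$) $|_D\theta\mathrel\iota|_{\bar D}\theta'$ if $\mathrm{key}(\theta)\ne\mathrm{key}(\theta')$; (S1) $|_D\theta\mathrel\iota\langle\theta_{\mathrm L},\theta_{\mathrm R}\rangle$ if $\theta\mathrel\iota\theta_D$; (S2)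 $\langle\theta_{\mathrm L},\theta_{\mathrm R}\rangle\mathrel\iota|_D\theta$ if $\theta_D\mathrel\iota\theta$; (S3) $\langle\theta_1,\theta_2\rangle\mathrel\iota\langle\theta_1',\theta_2'\rangle$ if $\theta_1\mathrel\iota\theta_1'$ and $\theta_2\mathrel\iota\theta_2'$. For CCSK transitions $t\mathrel\iota u$ iff $t,u$ are connected and the labels of $\hat t,\hat u$ satisfy $\iota$. CCSK transitions $t:P\to Q$ with label $\alpha[m]$ and $u:P\to R$ with label $\beta[n]$ (each forward or backward) are directly key independent if $m\ne n$ and there are transitions $u':Q\to S$ with label $\beta[n]$ and the direction of $u$, and $t':R\to S$ with label $\alpha[m]$ and the direction of $t$. *)

From Stdlib Require Import List Relations.
Import ListNotations.
Set Implicit Arguments.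

Section CCSK.
Variable N : Type.

Inductive vlab : Type := Nm (a : N) | CoNm (a : N).
Definition vbar (l : vlab) : vlab :=
  match l with Nm a => CoNm a | CoNm a => Nm a end.
Inductive label : Type := Vis (l : vlab) | Tau.

Definition key := nat.

Inductive proc : Type :=
| Nil
| Pre   (a : label) (X : proc)
| Res   (X : proc) (l : vlab)
| Sum   (X Y : proc)
| Par   (X Y : proc)
| KPre  (a : label) (k : key) (X : proc).

Fixpoint keys (X : proc) : list key :=
  match X with
  | Nil => []
  | Pre _ X => keys X
  | Res X _ => keys X
  | Sum X Y => keys X ++ keys Y
  | Par X Y => keys X ++ keys Y
  | KPre _ k X => k :: keys X
  end.

Inductive dir : Type := DL | DR.
Definition dbar (d : dir) : dir := match d with DL => DR | DR => DL end.

Inductive pelem : Type := PP (d : dir) | PS (d : dir).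

(* proof keyed labels:
   PAct u a k          = u a[k]
   PSyn u u1 l u2 k    = u < u1 l[k] , u2 (vbar l)[k] > *)
Inductive plab : Type :=
| PAct (u : list pelem) (a : label) (k : key)
| PSyn (u : list pelem) (u1 : list pelem) (l : vlab) (u2 : list pelem) (k : key).

Definition lab (t : plab) : label :=
  match t with PAct _ a _ => a | PSyn _ _ _ _ _ => Tau end.
Definition pkey (t : plab) : key :=
  match t with PAct _ _ k => k | PSyn _ _ _ _ k => k end.
Definition pcons (p : pelem) (t : plab) : plab :=
  match t with
  | PAct u a k => PAct (p :: u) a k
  | PSyn u u1 l u2 k => PSyn (p :: u) u1 l u2 k
  end.
Definition comp (d : dir) (u1 : list pelem) (l : vlab) (u2 : list pelem) (k : key) : plab :=
  match d with DL => PAct u1 (Vis l) k | DR => PAct u2 (Vis (vbar l)) k end.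

Inductive ptrans : proc -> plab -> proc -> Prop :=
| t_act : forall a X k, keys X = [] -> ptrans (Pre a X) (PAct [] a k) (KPre a k X)
| t_pre : forall a k X t X', ptrans X t X' -> pkey t <> k ->
    ptrans (KPre a k X) t (KPre a k X')
| t_res : forall X t X' l, ptrans X t X' -> lab t <> Vis l -> lab t <> Vis (vbar l) ->
    ptrans (Res X l) t (Res X' l)
| t_parL : forall X t X' Y, ptrans X t X' -> ~ In (pkey t) (keys Y) ->
    ptrans (Par X Y) (pcons (PP DL) t) (Par X' Y)
| t_parR : forall X t X' Y, ptrans X t X' -> ~ In (pkey t) (keys Y) ->
    ptrans (Par Y X) (pcons (PP DR) t) (Par Y X')
| t_syn : forall X X' Y Y' u1 u2 l k,
    ptrans X (PAct u1 (Vis l) k) X' -> ptrans Y (PAct u2 (Vis (vbar l)) k) Y' ->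
    ptrans (Par X Y) (PSyn [] u1 l u2 k) (Par X' Y')
| t_sumL : forall X t X' Y, ptrans X t X' -> keys Y = [] ->
    ptrans (Sum X Y) (pcons (PS DL) t) (Sum X' Y)
| t_sumR : forall X t X' Y, ptrans X t X' -> keys Y = [] ->
    ptrans (Sum Y X) (pcons (PS DR) t) (Sum Y X').

Inductive fb : Type := Fw | Bw.
Definition pstep (f : fb) (P : proc) (t : plab) (Q : proc) : Prop :=
  match f with Fw => ptrans P t Q | Bw => ptrans Q t P end.

Definition onestep (P Q : proc) : Prop := exists f t, pstep f P t Q.
Definition path (P Q : proc) : Prop := clos_refl_trans proc onestep P Q.
Definition reachable (P : proc) : Prop := exists X0, keys X0 = [] /\ path X0 P.

Definition ctrans (f : fb) (P : proc) (a : label) (k : key) (Q : proc) : Prop :=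
  exists t, lab t = a /\ pkey t = k /\ pstep f P t Q.

Inductive iota : plab -> plab -> Prop :=
| C1 : forall d t t', iota t t' -> iota (pcons (PS d) t) (pcons (PS d) t')
| P1 : forall d t t', iota t t' -> iota (pcons (PP d) t) (pcons (PP d) t')
| P2 : forall d t t', pkey t <> pkey t' -> iota (pcons (PP d) t) (pcons (PP (dbar d)) t')
| S1 : forall d t u1 l u2 k, iota t (comp d u1 l u2 k) ->
    iota (pcons (PP d) t) (PSyn [] u1 l u2 k)
| S2 : forall d t u1 l u2 k, iota (comp d u1 l u2 k) t ->
    iota (PSyn [] u1 l u2 k) (pcons (PP d) t)
| S3 : forall u1 l u2 k u1' l' u2' k',
    iota (PAct u1 (Vis l) k) (PAct u1' (Vis l') k') ->
    iota (PAct u2 (Vis (vbar l)) k) (PAct u2' (Vis (vbar l')) k') ->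
    iota (PSyn [] u1 l u2 k) (PSyn [] u1' l' u2' k').

(* A CCSK transition is given by its (unique) CCSK^P counterpart
   (f, P, t, Q) with pstep f P t Q; its CCSK label is (lab t)[pkey t]. *)

Definition connected (P1 Q1 P2 Q2 : proc) : Prop := path P1 Q2.

Definition iota_tr (f1 : fb) (P1 : proc) (t1 : plab) (Q1 : proc)
                   (f2 : fb) (P2 : proc) (t2 : plab) (Q2 : proc) : Prop :=
  connected P1 Q1 P2 Q2 /\ iota t1 t2.

Definition dki (f1 : fb) (P : proc) (t1 : plab) (Q : proc)
               (f2 : fb) (t2 : plab) (R : proc) : Prop :=
  pkey t1 <> pkey t2 /\
  exists S, ctrans f2 Q (lab t2) (pkey t2) S /\ ctrans f1 R (lab t1) (pkey t1) S.

End CCSK.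

(* Both directions go by induction on the common source P.  If t iota u, the two
   transitions act on disjoint parts of P (different parallel components, or independent
   parts of the components of a synchronisation), so each one can be replayed after the
   other, even with the same proof label, and they close a diamond.  Conversely, a step
   with key k toggles whether k occurs in the process and preserves the occurrence of every
   other key.  In a square whose sides carry distinct keys, projecting the closing steps
   onto a component of P therefore yields genuine steps wherever the opposite side moved
   that component, which supplies the squares for the induction hypothesis and excludes
   the configurations iota rejects, such as moves in both branches of a sum. *)

From Stdlib Require Import List Relations PeanoNat.
Import ListNotations.
Set Implicit Arguments.
Unset Strict Implicit.

Section Independence.
Variable N : Type.
Implicit Types (P Q R S X Y A B : proc N) (t s : plab N) (l : vlab N).

Lemma pkey_pcons p t : pkey (pcons p t) = pkey t.
Proof. now destruct t. Qed.

Lemma ptrans_keys P t Q : ptrans P t Q ->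
  ~ In (pkey t) (keys P) /\ In (pkey t) (keys Q) /\
  forall j, j <> pkey t -> (In j (keys P) <-> In j (keys Q)).
Proof.
  induction 1; simpl in *; rewrite ?pkey_pcons in *;
    repeat match goal with H : keys _ = [] |- _ => rewrite H in * end;
    simpl in *; try setoid_rewrite in_app_iff.
  all: firstorder (subst; congruence).
Qed.

Definition key_step k A B := exists f t, pkey t = k /\ pstep f A t B.

Lemma key_step_of_pstep f A t B : pstep f A t B -> key_step (pkey t) A B.
Proof. now exists f, t. Qed.

Lemma key_step_keys k A B : key_step k A B ->
  ~ (In k (keys A) <-> In k (keys B)) /\
  forall j, j <> k -> (In j (keys A) <-> In j (keys B)).
Proof.
  intros (f & t & <- & H).
  destruct f; apply ptrans_keys in H as (Hout & Hin & Hother);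
    split; try tauto; intros j Hj; specialize (Hother j Hj); tauto.
Qed.

Lemma key_step_refl_keys k A B j : clos_refl _ (key_step k) A B -> j <> k ->
  (In j (keys A) <-> In j (keys B)).
Proof. intros [B' H | ] Hj; [apply (key_step_keys H) | ]; tauto. Qed.

Definition key_square k1 k2 Q R := exists S, key_step k2 Q S /\ key_step k1 R S.

(* Whether k1 occurs differs between X and X1, but not between X and X2, nor between X1
   and A; hence X2 <> A, and symmetrically X1 <> A. *)
Lemma key_step_square k1 k2 X X1 X2 A : k1 <> k2 ->
  key_step k1 X X1 -> key_step k2 X X2 ->
  clos_refl _ (key_step k2) X1 A -> clos_refl _ (key_step k1) X2 A ->
  key_square k1 k2 X1 X2.
Proof.
  intros Hk H1 H2 H1A H2A. exists A.
  destruct (key_step_keys H1) as [Hflip1 Hkeep1], (key_step_keys H2) as [Hflip2 Hkeep2].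
  pose proof (Hkeep1 k2 (not_eq_sym Hk)). pose proof (Hkeep2 k1 Hk).
  pose proof (key_step_refl_keys H1A Hk). pose proof (key_step_refl_keys H2A (not_eq_sym Hk)).
  destruct H1A as [? H1A | ], H2A as [? H2A | ]; tauto.
Qed.

Lemma key_step_undo_same_key k j A B : key_step k A B -> clos_refl _ (key_step j) B A -> j = k.
Proof.
  intros H HBA. destruct (Nat.eq_dec j k) as [|Hjk]; [assumption|].
  destruct (key_step_keys H) as [Hflip _].
  pose proof (key_step_refl_keys HBA (not_eq_sym Hjk)). tauto.
Qed.

Lemma key_step_keys_nil k A B : key_step k A B -> keys A = [] -> keys B <> [].
Proof. intros H HA HB. destruct (key_step_keys H) as [Hflip _]. rewrite HA, HB in Hflip. tauto. Qed.

Lemma pstep_nil_inv f t Q : ~ pstep f (Nil N) t Q.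
Proof. destruct f; intro H; inversion H. Qed.

Lemma pstep_pre_inv f a X t Q : pstep f (Pre a X) t Q ->
  exists k, t = PAct [] a k /\ Q = KPre a k X.
Proof. destruct f; intro H; inversion H; subst; eauto. Qed.

Lemma pstep_kpre_inv f a k X t Q : pstep f (KPre a k X) t Q ->
  (exists X', pstep f X t X' /\ pkey t <> k /\ Q = KPre a k X') \/
  (t = PAct [] a k /\ Q = Pre a X).
Proof. destruct f; intro H; inversion H; subst; eauto. Qed.

Lemma pstep_res_inv f X l t Q : pstep f (Res X l) t Q ->
  exists X', pstep f X t X' /\ lab t <> Vis l /\ lab t <> Vis (vbar l) /\ Q = Res X' l.
Proof. destruct f; intro H; inversion H; subst; eauto 10. Qed.

Lemma pstep_sum_inv f X Y t Q : pstep f (Sum X Y) t Q ->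
  (exists s X', t = pcons (PS DL) s /\ pstep f X s X' /\ keys Y = [] /\ Q = Sum X' Y) \/
  (exists s Y', t = pcons (PS DR) s /\ pstep f Y s Y' /\ keys X = [] /\ Q = Sum X Y').
Proof. destruct f; intro H; inversion H; subst; eauto 10. Qed.

Lemma pstep_par_inv f X Y t Q : pstep f (Par X Y) t Q ->
  (exists s X', t = pcons (PP DL) s /\ pstep f X s X' /\
     ~ In (pkey s) (keys Y) /\ Q = Par X' Y) \/
  (exists s Y', t = pcons (PP DR) s /\ pstep f Y s Y' /\
     ~ In (pkey s) (keys X) /\ Q = Par X Y') \/
  (exists u1 l u2 k X' Y', t = PSyn [] u1 l u2 k /\
     pstep f X (comp DL u1 l u2 k) X' /\ pstep f Y (comp DR u1 l u2 k) Y' /\ Q = Par X' Y').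
Proof. destruct f; intro H; inversion H; subst; eauto 20. Qed.

Lemma pstep_kpre f a k X X' t : pstep f X t X' -> pkey t <> k ->
  pstep f (KPre a k X) t (KPre a k X').
Proof. destruct f; now constructor. Qed.

Lemma pstep_res f X X' l t : pstep f X t X' -> lab t <> Vis l -> lab t <> Vis (vbar l) ->
  pstep f (Res X l) t (Res X' l).
Proof. destruct f; now constructor. Qed.

Lemma pstep_sumL f X X' Y t : pstep f X t X' -> keys Y = [] ->
  pstep f (Sum X Y) (pcons (PS DL) t) (Sum X' Y).
Proof. destruct f; now constructor. Qed.

Lemma pstep_sumR f X X' Y t : pstep f X t X' -> keys Y = [] ->
  pstep f (Sum Y X) (pcons (PS DR) t) (Sum Y X').
Proof. destruct f; now constructor. Qed.

Lemma pstep_parL f X X' Y t : pstep f X t X' -> ~ In (pkey t) (keys Y) ->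
  pstep f (Par X Y) (pcons (PP DL) t) (Par X' Y).
Proof. destruct f; now constructor. Qed.

Lemma pstep_parR f X X' Y t : pstep f X t X' -> ~ In (pkey t) (keys Y) ->
  pstep f (Par Y X) (pcons (PP DR) t) (Par Y X').
Proof. destruct f; now constructor. Qed.

Lemma pstep_syn f X X' Y Y' u1 l u2 k :
  pstep f X (comp DL u1 l u2 k) X' -> pstep f Y (comp DR u1 l u2 k) Y' ->
  pstep f (Par X Y) (PSyn [] u1 l u2 k) (Par X' Y').
Proof. destruct f; simpl; econstructor; eauto. Qed.

Lemma pstep_keys_other f A t B j : pstep f A t B -> j <> pkey t ->
  ~ In j (keys A) -> ~ In j (keys B).
Proof.
  intros H Hj. destruct (key_step_keys (key_step_of_pstep H)) as [_ Hkeep].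
  now rewrite (Hkeep j Hj).
Qed.

Lemma pcons_inj p p' t t' : pcons p t = pcons p' t' -> p = p' /\ t = t'.
Proof. destruct t, t'; simpl; intro H; now inversion H. Qed.

Lemma pcons_neq_syn p t u1 l u2 k : pcons p t <> PSyn [] u1 l u2 k.
Proof. now destruct t. Qed.

Lemma pcons_neq_act p t a k : pcons p t <> PAct [] a k.
Proof. now destruct t. Qed.

Ltac plab_eqs :=
  repeat (match goal with
  | H : pcons _ _ = pcons _ _ |- _ => apply pcons_inj in H as [? ?]
  | H : pcons _ _ = PSyn [] _ _ _ _ |- _ => now apply pcons_neq_syn in H
  | H : PSyn [] _ _ _ _ = pcons _ _ |- _ => now symmetry in H; apply pcons_neq_syn in H
  | H : pcons _ _ = PAct [] _ _ |- _ => now apply pcons_neq_act in H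
  | H : PAct [] _ _ = pcons _ _ |- _ => now symmetry in H; apply pcons_neq_act in H
  | H : PP _ = PP _ |- _ => injection H as H
  | H : PS _ = PS _ |- _ => injection H as H
  | H : PSyn _ _ _ _ _ = PSyn _ _ _ _ _ |- _ => injection H as H
  end; subst); try discriminate.

Lemma iota_pkey_neq t t' : iota t t' -> pkey t <> pkey t'.
Proof. induction 1; rewrite ?pkey_pcons; try destruct d; auto. Qed.

Lemma iota_act_l a k t : ~ iota (PAct [] a k) t.
Proof. intro H; inversion H; plab_eqs. Qed.

Lemma iota_act_r a k t : ~ iota t (PAct [] a k).
Proof. intro H; inversion H; plab_eqs. Qed.

Lemma iota_sum_inv d d' t t' : iota (pcons (PS d) t) (pcons (PS d') t') -> d = d' /\ iota t t'.
Proof. intro H; inversion H; plab_eqs; auto. Qed.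

Lemma iota_par_inv d d' t t' : iota (pcons (PP d) t) (pcons (PP d') t') ->
  (d' = d /\ iota t t') \/ (d' = dbar d /\ pkey t <> pkey t').
Proof. intro H; inversion H; plab_eqs; auto. Qed.

Lemma iota_par_syn_inv d t u1 l u2 k : iota (pcons (PP d) t) (PSyn [] u1 l u2 k) ->
  iota t (comp d u1 l u2 k).
Proof. intro H; inversion H; plab_eqs; auto. Qed.

Lemma iota_syn_par_inv d t u1 l u2 k : iota (PSyn [] u1 l u2 k) (pcons (PP d) t) ->
  iota (comp d u1 l u2 k) t.
Proof. intro H; inversion H; plab_eqs; auto. Qed.

Lemma iota_syn_inv u1 l u2 k u1' l' u2' k' :
  iota (PSyn [] u1 l u2 k) (PSyn [] u1' l' u2' k') ->
  iota (comp DL u1 l u2 k) (comp DL u1' l' u2' k') /\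
  iota (comp DR u1 l u2 k) (comp DR u1' l' u2' k').
Proof. intro H; inversion H; plab_eqs; auto. Qed.

Definition iota_diamond P := forall f1 t1 Q f2 t2 R,
  pstep f1 P t1 Q -> pstep f2 P t2 R -> iota t1 t2 ->
  exists S, pstep f2 Q t2 S /\ pstep f1 R t1 S.

Ltac close_diamond :=
  eexists; split;
  eauto using pstep_kpre, pstep_res, pstep_sumL, pstep_sumR, pstep_parL, pstep_parR,
    pstep_syn, pstep_keys_other, not_eq_sym.

Lemma iota_diamond_nil : iota_diamond (Nil N).
Proof. intros ? ? ? ? ? ? H1. now apply pstep_nil_inv in H1. Qed.

Lemma iota_diamond_pre a X : iota_diamond (Pre a X).
Proof.
  intros ? ? ? ? ? ? H1 _ Hi. apply pstep_pre_inv in H1 as (k & -> & _).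
  now apply iota_act_l in Hi.
Qed.

Lemma iota_diamond_res X l : iota_diamond X -> iota_diamond (Res X l).
Proof.
  intros IHX f1 t1 Q f2 t2 R H1 H2 Hi.
  apply pstep_res_inv in H1 as (X1 & H1 & ? & ? & ->).
  apply pstep_res_inv in H2 as (X2 & H2 & ? & ? & ->).
  destruct (IHX _ _ _ _ _ _ H1 H2 Hi) as (S & ? & ?). close_diamond.
Qed.

Lemma iota_diamond_sum X Y : iota_diamond X -> iota_diamond Y -> iota_diamond (Sum X Y).
Proof.
  intros IHX IHY f1 t1 Q f2 t2 R H1 H2 Hi.
  apply pstep_sum_inv in H1 as [(s1 & X1 & -> & H1 & ? & ->) | (s1 & Y1 & -> & H1 & ? & ->)];
  apply pstep_sum_inv in H2 as [(s2 & X2 & -> & H2 & ? & ->) | (s2 & Y2 & -> & H2 & ? & ->)];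
  apply iota_sum_inv in Hi as [Hd Hi]; try discriminate Hd.
  - destruct (IHX _ _ _ _ _ _ H1 H2 Hi) as (S & ? & ?). close_diamond.
  - destruct (IHY _ _ _ _ _ _ H1 H2 Hi) as (S & ? & ?). close_diamond.
Qed.

Lemma iota_diamond_par X Y : iota_diamond X -> iota_diamond Y -> iota_diamond (Par X Y).
Proof.
  intros IHX IHY f1 t1 Q f2 t2 R H1 H2 Hi.
  pose proof (iota_pkey_neq Hi) as Hk.
  apply pstep_par_inv in H1 as [(s1 & X1 & -> & H1 & Hn1 & ->) | [(s1 & Y1 & -> & H1 & Hn1 & ->) |
    (u1 & l & u2 & k & X1 & Y1 & -> & H1 & H1' & ->)]];
  apply pstep_par_inv in H2 as [(s2 & X2 & -> & H2 & Hn2 & ->) | [(s2 & Y2 & -> & H2 & Hn2 & ->) |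
    (u1' & l' & u2' & k' & X2 & Y2 & -> & H2 & H2' & ->)]];
  rewrite ?pkey_pcons in Hk; simpl pkey in Hk.
  - apply iota_par_inv in Hi as [[_ Hi] | [? _]]; [|discriminate].
    destruct (IHX _ _ _ _ _ _ H1 H2 Hi) as (S & ? & ?). close_diamond.
  - close_diamond.
  - apply iota_par_syn_inv in Hi.
    destruct (IHX _ _ _ _ _ _ H1 H2 Hi) as (S & ? & ?). close_diamond.
  - close_diamond.
  - apply iota_par_inv in Hi as [[_ Hi] | [? _]]; [|discriminate].
    destruct (IHY _ _ _ _ _ _ H1 H2 Hi) as (S & ? & ?). close_diamond.
  - apply iota_par_syn_inv in Hi.
    destruct (IHY _ _ _ _ _ _ H1 H2' Hi) as (S & ? & ?). close_diamond.
  - apply iota_syn_par_inv in Hi.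
    destruct (IHX _ _ _ _ _ _ H1 H2 Hi) as (S & ? & ?). close_diamond.
  - apply iota_syn_par_inv in Hi.
    destruct (IHY _ _ _ _ _ _ H1' H2 Hi) as (S & ? & ?). close_diamond.
  - apply iota_syn_inv in Hi as [HiX HiY].
    destruct (IHX _ _ _ _ _ _ H1 H2 HiX) as (SX & ? & ?).
    destruct (IHY _ _ _ _ _ _ H1' H2' HiY) as (SY & ? & ?). close_diamond.
Qed.

Lemma iota_diamond_kpre a k X : iota_diamond X -> iota_diamond (KPre a k X).
Proof.
  intros IHX f1 t1 Q f2 t2 R H1 H2 Hi.
  apply pstep_kpre_inv in H1 as [(X1 & H1 & ? & ->) | (-> & _)];
    [| now apply iota_act_l in Hi].
  apply pstep_kpre_inv in H2 as [(X2 & H2 & ? & ->) | (-> & _)];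
    [| now apply iota_act_r in Hi].
  destruct (IHX _ _ _ _ _ _ H1 H2 Hi) as (S & ? & ?). close_diamond.
Qed.

Lemma iota_diamond_all P : iota_diamond P.
Proof.
  induction P; auto using iota_diamond_nil, iota_diamond_pre, iota_diamond_res,
    iota_diamond_sum, iota_diamond_par, iota_diamond_kpre.
Qed.

Lemma key_step_pre_inv j a X Z : key_step j (Pre a X) Z -> Z = KPre a j X.
Proof. intros (f & t & <- & H). now apply pstep_pre_inv in H as (k & -> & ->). Qed.

Lemma key_step_kpre_inv j a k X Z : key_step j (KPre a k X) Z ->
  (exists A, Z = KPre a k A /\ key_step j X A /\ j <> k) \/ (j = k /\ Z = Pre a X).
Proof.
  intros (f & t & <- & H).
  apply pstep_kpre_inv in H as [(X' & H & Hk & ->) | (-> & ->)]; [left | now right].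
  exists X'. eauto using key_step_of_pstep.
Qed.

Lemma key_step_res_inv j X l Z : key_step j (Res X l) Z -> exists A, Z = Res A l /\ key_step j X A.
Proof.
  intros (f & t & <- & H). apply pstep_res_inv in H as (X' & H & _ & _ & ->).
  eauto using key_step_of_pstep.
Qed.

Lemma key_step_sum_inv j X Y Z : key_step j (Sum X Y) Z ->
  (exists A, Z = Sum A Y /\ key_step j X A /\ keys Y = []) \/
  (exists B, Z = Sum X B /\ key_step j Y B /\ keys X = []).
Proof.
  intros (f & t & <- & H).
  apply pstep_sum_inv in H as [(s & X' & -> & H & ? & ->) | (s & Y' & -> & H & ? & ->)];
    rewrite pkey_pcons; [left | right]; eauto using key_step_of_pstep.
Qed.

Lemma key_step_sum_inv_refl j X Y Z : key_step j (Sum X Y) Z -> exists A B, Z = Sum A B /\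
  clos_refl _ (key_step j) X A /\ clos_refl _ (key_step j) Y B.
Proof.
  intros H. apply key_step_sum_inv in H as [(A & -> & H & _) | (B & -> & H & _)];
    eauto 8 using r_step, r_refl.
Qed.

Lemma key_step_par_inv j X Y Z : key_step j (Par X Y) Z -> exists A B, Z = Par A B /\
  clos_refl _ (key_step j) X A /\ clos_refl _ (key_step j) Y B.
Proof.
  intros (f & t & <- & H).
  apply pstep_par_inv in H as [(s & X' & -> & H & _ & ->) | [(s & Y' & -> & H & _ & ->) |
    (u1 & l & u2 & k & X' & Y' & -> & H & H' & ->)]];
    rewrite ?pkey_pcons; eauto 8 using r_step, r_refl, key_step_of_pstep.
  apply key_step_of_pstep in H, H'. eauto 8 using r_step.
Qed.

Definition key_square_independent P := forall f1 t1 Q f2 t2 R,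
  pstep f1 P t1 Q -> pstep f2 P t2 R -> pkey t1 <> pkey t2 ->
  key_square (pkey t1) (pkey t2) Q R -> iota t1 t2.

Lemma key_square_independent_nil : key_square_independent (Nil N).
Proof. intros ? ? ? ? ? ? H1. now apply pstep_nil_inv in H1. Qed.

Lemma key_square_independent_pre a X : key_square_independent (Pre a X).
Proof.
  intros f1 t1 Q f2 t2 R H1 H2 Hk (S & HQ & HR).
  apply pstep_pre_inv in H1 as (k1 & -> & ->), H2 as (k2 & -> & ->); simpl in *.
  apply key_step_kpre_inv in HQ as [(A & -> & _) | (? & _)]; [| congruence].
  apply key_step_kpre_inv in HR as [(A' & HS & _) | (? & _)]; [| congruence].
  injection HS; congruence.
Qed.

Lemma key_square_independent_res X l :
  key_square_independent X -> key_square_independent (Res X l).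
Proof.
  intros IHX f1 t1 Q f2 t2 R H1 H2 Hk (S & HQ & HR).
  apply pstep_res_inv in H1 as (X1 & H1 & _ & _ & ->), H2 as (X2 & H2 & _ & _ & ->).
  apply key_step_res_inv in HQ as (A & -> & HQ), HR as (A' & HS & HR).
  injection HS as <-. apply (IHX _ _ _ _ _ _ H1 H2 Hk). now exists A.
Qed.

Lemma key_square_independent_sum X Y :
  key_square_independent X -> key_square_independent Y -> key_square_independent (Sum X Y).
Proof.
  intros IHX IHY f1 t1 Q f2 t2 R H1 H2 Hk (S & HQ & HR).
  apply pstep_sum_inv in H1 as [(s1 & X1 & -> & H1 & HY & ->) | (s1 & Y1 & -> & H1 & HX & ->)];
  apply pstep_sum_inv in H2 as [(s2 & X2 & -> & H2 & HY' & ->) | (s2 & Y2 & -> & H2 & HX' & ->)];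
  rewrite ?pkey_pcons in *.
  - apply key_step_sum_inv_refl in HQ as (A & B & -> & HQ & _), HR as (A' & B' & HS & HR & _).
    injection HS as <- <-. apply C1; eapply IHX; eauto using key_step_square, key_step_of_pstep.
  - exfalso. apply key_step_sum_inv in HQ as [(A & -> & _) | (B & -> & _ & HX1)].
    + apply key_step_sum_inv_refl in HR as (A' & B' & HS & _ & HR). injection HS as <- <-.
      exact (Hk (key_step_undo_same_key (key_step_of_pstep H2) HR)).
    + exact (key_step_keys_nil (key_step_of_pstep H1) HX' HX1).
  - exfalso. apply key_step_sum_inv in HQ as [(A & -> & _ & HY1) | (B & -> & _)].
    + exact (key_step_keys_nil (key_step_of_pstep H1) HY' HY1).
    + apply key_step_sum_inv_refl in HR as (A' & B' & HS & HR & _). injection HS as <- <-.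
      exact (Hk (key_step_undo_same_key (key_step_of_pstep H2) HR)).
  - apply key_step_sum_inv_refl in HQ as (A & B & -> & _ & HQ), HR as (A' & B' & HS & _ & HR).
    injection HS as <- <-. apply C1; eapply IHY; eauto using key_step_square, key_step_of_pstep.
Qed.

Lemma key_square_independent_par X Y :
  key_square_independent X -> key_square_independent Y -> key_square_independent (Par X Y).
Proof.
  intros IHX IHY f1 t1 Q f2 t2 R H1 H2 Hk (S & HQ & HR).
  apply pstep_par_inv in H1 as [(s1 & X1 & -> & H1 & _ & ->) | [(s1 & Y1 & -> & H1 & _ & ->) |
    (u1 & l & u2 & k & X1 & Y1 & -> & H1 & H1' & ->)]];
  apply pstep_par_inv in H2 as [(s2 & X2 & -> & H2 & _ & ->) | [(s2 & Y2 & -> & H2 & _ & ->) |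
    (u1' & l' & u2' & k' & X2 & Y2 & -> & H2 & H2' & ->)]];
  rewrite ?pkey_pcons in *; simpl pkey in *;
  apply key_step_par_inv in HQ as (A & B & -> & HQX & HQY), HR as (A' & B' & HS & HRX & HRY);
  injection HS as <- <-.
  - apply P1; eapply IHX; eauto using key_step_square, key_step_of_pstep.
  - exact (P2 DL _ _ Hk).
  - apply (S1 DL); eapply IHX; eauto using key_step_square, key_step_of_pstep.
  - exact (P2 DR _ _ Hk).
  - apply P1; eapply IHY; eauto using key_step_square, key_step_of_pstep.
  - apply (S1 DR); eapply IHY; eauto using key_step_square, key_step_of_pstep.
  - apply (S2 DL); eapply IHX; eauto using key_step_square, key_step_of_pstep.
  - apply (S2 DR); eapply IHY; eauto using key_step_square, key_step_of_pstep.
  - apply S3; [eapply IHX | eapply IHY]; eauto using key_step_square, key_step_of_pstep.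
Qed.

Lemma key_square_independent_kpre a k X :
  key_square_independent X -> key_square_independent (KPre a k X).
Proof.
  intros IHX f1 t1 Q f2 t2 R H1 H2 Hk (S & HQ & HR).
  apply pstep_kpre_inv in H1 as [(X1 & H1 & Hk1 & ->) | (-> & ->)];
  apply pstep_kpre_inv in H2 as [(X2 & H2 & Hk2 & ->) | (-> & ->)]; simpl pkey in *.
  - apply key_step_kpre_inv in HQ as [(A & -> & HQ & _) | (? & _)]; [| congruence].
    apply key_step_kpre_inv in HR as [(A' & HS & HR & _) | (? & _)]; [| congruence].
    injection HS as <-. apply (IHX _ _ _ _ _ _ H1 H2 Hk). now exists A.
  - apply key_step_pre_inv in HR as ->.
    apply key_step_kpre_inv in HQ as [(? & _ & _ & ?) | (_ & ?)]; [congruence | discriminate].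
  - apply key_step_pre_inv in HQ as ->.
    apply key_step_kpre_inv in HR as [(? & _ & _ & ?) | (_ & ?)]; [congruence | discriminate].
  - congruence.
Qed.

Lemma key_square_independent_all P : key_square_independent P.
Proof.
  induction P; auto using key_square_independent_nil, key_square_independent_pre,
    key_square_independent_res, key_square_independent_sum, key_square_independent_par,
    key_square_independent_kpre.
Qed.
End Independence.

Theorem lemma6p11 (N : Type) (P Q R : proc N) (f1 f2 : fb) (t1 t2 : plab N) :
  reachable P ->
  pstep f1 P t1 Q -> pstep f2 P t2 R ->
  (dki f1 P t1 Q f2 t2 R <-> iota_tr f1 P t1 Q f2 P t2 R).
Proof.
  intros _ H1 H2. split.
  - intros [Hk (S & (s2 & _ & Hs2 & HQ) & (s1 & _ & Hs1 & HR))].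
    split; [now apply rt_step; exists f2, t2 |].
    apply (key_square_independent_all H1 H2 Hk).
    exists S; split; [exists f2, s2 | exists f1, s1]; auto.
  - intros [_ Hi]. split; [exact (iota_pkey_neq Hi) |].
    destruct (iota_diamond_all H1 H2 Hi) as (S & HQ & HR).
    exists S; split; [exists t2 | exists t1]; auto.
Qed.
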